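(* Fix a firm $A\subset\mathcal{A}$, a full-support skill distribution $p$, a full-support perception $q$, and signal structures with $\langle S',\pi'\rangle\succsim_G\langle S,\pi\rangle$ via a garbling kernel $g$. Fix surplus-maximizing selections $\widehat a_s$ ($s\in S$) and $\widehat a'_{s'}$ ($s'\in S'$) as in the context. (a) $W_A(p,q,\langle S',\pi'\rangle)-W_A(p,q,\langle S,\pi\rangle)=\mathcal{C}_A(p,q,\langle S,\pi\rangle,\langle S',\pi'\rangle)+\mathcal{I}_A(p,q,\langle S,\pi\rangle,\langle S',\pi'\rangle)$. (b) $\mathcal{I}_A(p,q,\langle S,\pi\rangle,\langle S',\pi'\rangle)\ge 0$. Suppose in addition that $A\subset\mathcal{A}_M$ and that $\langle S',\pi'\rangle$ is MLR. Then: (c) if $p\succsim_{LR}q$, then $\mathcal{C}_A(p,q,\langle S,\pi\rangle,\langle S',\pi'\rangle)\ge 0$; (d) if $q\succsim_{LR}p$, then $\mathcal{C}_A(p,q,\langle S,\pi\rangle,\langle S',\pi'\rangle)\le 0$.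
   Context: Let $\Theta\subset\mathbb{R}$ be a finite set of skill types with $|\Theta|\ge 2$. A task is a vector $a\in\mathcal{A}:=\mathbb{R}^\Theta$. A firm is a non-empty finite set $A\subset\mathcal{A}$. The firm is monotone if $A\subset\mathcal{A}_M:=\{a\in\mathbb{R}^\Theta: a(\theta')>a(\theta)\text{ whenever }\theta'>\theta\}$. A signal structure $\langle S,\pi\rangle$ consists of a non-empty finite set $S$ and a map $\pi:S\times\Theta\to[0,1]$ with $\sum_{s}\pi(s|\theta)=1$ for each $\theta$, such that every $s\in S$ has $\pi(s|\theta)>0$ for some $\theta$. Distributions and pay: - $p,q\in\Delta(\Theta)$ have full support. - Posterior: $q_{\langle S,\pi\rangle}(\theta|s):=q(\theta)\pi(s|\theta)/\sum_{\theta'}q(\theta')\pi(s|\theta')$. - Pay: $w_A(s,q,\langle S,\pi\rangle):=\max_{a\in A}\sum_\theta q_{\langle S,\pi\rangle}(\theta|s)a(\theta)$. - Average pay: $W_A(p,q,\langle S,\pi\rangle):=\sum_\theta p(\theta)\sum_s\pi(s|\theta)w_A(s,q,\langle S,\pi\rangle)$. Orders on distributions and signal structures: - $q'\succsim_{LR}q$ means $q(\theta)q'(\theta')\ge q(\theta')q'(\theta)$ whenever $\theta'>\theta$. - $\langle S',\pi'\rangle\succsim_G\langle S,\pi\rangle$ means there is a garbling kernel $g:S\times S'\to[0,1]$ with $\sum_{s}g(s|s')=1$ for each $s'$ and $\pi(s|\theta)=\sum_{s'}g(s|s')\pi'(s'|\theta)$ for all $s,\theta$. - $\langle S,\pi\rangle$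 is MLR if $S\subset\mathbb{R}$ and $\pi(s|\theta)\pi(s'|\theta')\ge\pi(s|\theta')\pi(s'|\theta)$ whenever $s'>s$ and $\theta'>\theta$. Joint distributions: define $\mu_p,\mu_q\in\Delta(\Theta\times S\times S')$ by $\mu_r(\theta,s,s'):=r(\theta)\pi'(s'|\theta)g(s|s')$ for $r\in\{p,q\}$. Marginals and conditionals such as $\mu_r(s)$, $\mu_r(s'|s)$, $\mu_r(\theta|s,s')$ are derived from these in the usual way; summands whose conditioning event has zero probability are taken to be zero. Task selections: $\widehat a_s\in\arg\max_{a\in A}\sum_\theta q_{\langle S,\pi\rangle}(\theta|s)a(\theta)$ for each $s\in S$, and $\widehat a'_{s'}\in\arg\max_{a\in A}\sum_\theta q_{\langle S',\pi'\rangle}(\theta|s')a(\theta)$ for each $s'\in S'$. Components: - Perception-correcting: $\mathcal{C}_A(p,q,\langle S,\pi\rangle,\langle S',\pi'\rangle):=\sum_{s}\mu_p(s)\sum_{s'}[\mu_p(s'|s)-\mu_q(s'|s)]\sum_\theta\mu_q(\theta|s,s')\widehat a_s(\theta)$. - Instrumental: $\mathcal{I}_A(p,q,\langle S,\pi\rangle,\langle S',\pi'\rangle):=\sum_{s'}\mu_p(s')\sum_\theta q_{\langle S',\pi'\rangle}(\theta|s')\big[\widehat a'_{s'}(\theta)-\sum_s g(s|s')\widehat a_s(\theta)\big]$, which equals $\sum_s\mu_p(s)\sum_{s'}\mu_p(s'|s)\sum_\theta\mu_q(\theta|s,s')[\widehat a'_{s'}(\theta)-\widehat a_s(\theta)]$.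 *)

(* Reals: an arbitrary R : realFieldType (all notions are
   finite sums/products/quotients/max of reals, so this generalises R). *)
From HB Require Import structures.
From mathcomp Require Import all_boot all_order all_algebra.
Set Implicit Arguments. Unset Strict Implicit. Unset Printing Implicit Defensive.
Import Order.TTheory GRing.Theory Num.Theory.
Local Open Scope ring_scope.

Section Firm.
Variable R : realFieldType.

(* Theta is a finite type T together with an injective embedding th : T -> R *)

Definition full_support (T : finType) (p : T -> R) : Prop :=
  (forall t, 0 < p t) /\ \sum_(t : T) p t = 1.

(* signal structure <S, pi> : pi s t = pi(s|theta) *)
Definition signal_structure (T S : finType) (pi : S -> T -> R) : Prop :=
  [/\ (forall s t, 0 <= pi s t <= 1),
      (forall t, \sum_(s : S) pi s t = 1) &
      (forall s, exists t, 0 < pi s t)].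

(* <S',pi'> >=_G <S,pi> via the garbling kernel g (g s s' = g(s|s')) *)
Definition garbling (T S S' : finType) (pi : S -> T -> R) (pi' : S' -> T -> R)
    (g : S -> S' -> R) : Prop :=
  [/\ (forall s s', 0 <= g s s' <= 1),
      (forall s', \sum_(s : S) g s s' = 1) &
      (forall s t, pi s t = \sum_(s' : S') g s s' * pi' s' t)].

Definition LR_ge (T : finType) (th : T -> R) (q' q : T -> R) : Prop :=
  forall t t', th t < th t' -> q t * q' t' >= q t' * q' t.

Definition MLR (T S : finType) (th : T -> R) (sv : S -> R) (pi : S -> T -> R) : Prop :=
  forall s s' t t', sv s < sv s' -> th t < th t' ->
    pi s t * pi s' t' >= pi s t' * pi s' t.

Definition monotone_firm (T : finType) (th : T -> R) (A : seq {ffun T -> R}) : Prop :=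
  forall a, a \in A -> forall t t', th t < th t' -> a t < a t'.

Definition posterior (T S : finType) (q : T -> R) (pi : S -> T -> R) (s : S) (t : T) : R :=
  q t * pi s t / \sum_(t' : T) q t' * pi s t'.

Definition post_val (T S : finType) (q : T -> R) (pi : S -> T -> R) (s : S)
    (a : {ffun T -> R}) : R :=
  \sum_(t : T) posterior q pi s t * a t.

Definition maxA (T : finType) (A : seq {ffun T -> R}) (f : {ffun T -> R} -> R) : R :=
  \big[Num.max/f (head 0 A)]_(a <- A) f a.

Definition pay (T S : finType) (A : seq {ffun T -> R}) (q : T -> R) (pi : S -> T -> R)
    (s : S) : R :=
  maxA A (post_val q pi s).

Definition avg_pay (T S : finType) (A : seq {ffun T -> R}) (p q : T -> R)
    (pi : S -> T -> R) : R :=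
  \sum_(t : T) p t * \sum_(s : S) pi s t * pay A q pi s.

Definition selection (T S : finType) (A : seq {ffun T -> R}) (q : T -> R)
    (pi : S -> T -> R) (ahat : S -> {ffun T -> R}) : Prop :=
  forall s, ahat s \in A /\
    (forall a, a \in A -> post_val q pi s a <= post_val q pi s (ahat s)).

(* Division by 0 is 0 in MathComp, which
   implements the convention that conditionals on null events vanish. *)
Section Joint.
Variables (T S S' : finType) (pi' : S' -> T -> R) (g : S -> S' -> R).

Definition mu (r : T -> R) (t : T) (s : S) (s' : S') : R := r t * pi' s' t * g s s'.
Definition mu_s (r : T -> R) (s : S) : R := \sum_(t : T) \sum_(s' : S') mu r t s s'.
Definition mu_s' (r : T -> R) (s' : S') : R := \sum_(t : T) \sum_(s : S) mu r t s s'.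
Definition mu_ss' (r : T -> R) (s : S) (s' : S') : R := \sum_(t : T) mu r t s s'.
Definition mu_s'_given_s (r : T -> R) (s' : S') (s : S) : R := mu_ss' r s s' / mu_s r s.
Definition mu_t_given_ss' (r : T -> R) (t : T) (s : S) (s' : S') : R :=
  mu r t s s' / mu_ss' r s s'.

Definition Ccomp (p q : T -> R) (ahat : S -> {ffun T -> R}) : R :=
  \sum_(s : S) mu_s p s *
    \sum_(s' : S') (mu_s'_given_s p s' s - mu_s'_given_s q s' s) *
      \sum_(t : T) mu_t_given_ss' q t s s' * ahat s t.

Definition Icomp (p q : T -> R) (ahat : S -> {ffun T -> R}) (ahat' : S' -> {ffun T -> R}) : R :=
  \sum_(s' : S') mu_s' p s' *
    \sum_(t : T) posterior q pi' s' t *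
      (ahat' s' t - \sum_(s : S) g s s' * ahat s t).
End Joint.

End Firm.

From Pilot Require Import Defs.
From HB Require Import structures.
From mathcomp Require Import all_boot all_order all_algebra.
From mathcomp Require Import ring lra.
Import Order.TTheory GRing.Theory Num.Theory.
Local Open Scope ring_scope.
Set Implicit Arguments. Unset Strict Implicit.

(* Write m_r(s') for the probability of the fine signal s' under the prior r.
   Every quantity lives on the joint space of (theta, s, s'), and the garbling
   turns the coarse posterior means into g-averages of the fine ones; this
   gives (a) by telescoping, and (b) because each ahat'_{s'} beats the
   g(.|s')-mixture of the coarse selections under the fine posterior.
   For (c)-(d), symmetrising over pairs of fine signals writes each coarse
   signal's share of C as a positive multiple of a sum of terms
     g(s|s1) g(s|s2) (m_q(s1) m_p(s2) - m_p(s1) m_q(s2)) (v(s2) - v(s1)),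
   where v(s') is the fine posterior mean of ahat_s.  Under MLR the middle
   factor has the sign of the likelihood-ratio order between p and q, and the
   last one is nonnegative because fine posteriors increase with the signal
   while the tasks of a monotone firm are increasing in the skill. *)

Section DoubleSums.
Variables (R : realFieldType) (I : finType) (rk : I -> R).
Hypothesis rk_inj : injective rk.

Lemma double_sum_ge0 (F : I -> I -> R) :
  (forall i, 0 <= F i i) -> (forall i j, rk i < rk j -> 0 <= F i j + F j i) ->
  0 <= \sum_i \sum_j F i j.
Proof.
move=> Fii Fij.
have Fsym i j : 0 <= F i j + F j i.
  case: (ltgtP (rk i) (rk j)) => [lt_ij|lt_ji|/rk_inj->]; first exact: Fij.
    by rewrite addrC; exact: Fij.
  exact: addr_ge0.
have swap : \sum_i \sum_j F j i = \sum_i \sum_j F i j by rewrite exchange_big.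
have : 0 <= \sum_i \sum_j (F i j + F j i) by do 2![apply: sumr_ge0 => ? _].
under eq_bigr do rewrite big_split.
rewrite big_split /= swap; lra.
Qed.

Lemma weighted_double_sum_ge0 (w v : I -> R) (d : I -> I -> R) :
  (forall i, 0 <= w i) -> (forall i j, d j i = - d i j) ->
  (forall i j, rk i < rk j -> 0 <= d i j) ->
  (forall i j, rk i < rk j -> v i <= v j) ->
  0 <= \sum_i \sum_j w i * w j * d i j * v j.
Proof.
move=> w_ge0 d_anti d_ge0 v_mono; apply: double_sum_ge0 => [i|i j lt_ij].
  have -> : d i i = 0 by have := d_anti i i; lra.
  by rewrite mulr0 mul0r.
have -> : w i * w j * d i j * v j + w j * w i * d j i * v i
          = w i * w j * d i j * (v j - v i) by rewrite d_anti; ring.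
by rewrite !mulr_ge0 ?d_ge0 // subr_ge0 v_mono.
Qed.

End DoubleSums.

Section LikelihoodRatio.
Variables (R : realFieldType) (T : finType) (th : T -> R).
Hypothesis th_inj : injective th.

Lemma LR_ge_cross (x y e f : T -> R) : LR_ge th x y -> LR_ge th f e ->
  (\sum_t x t * e t) * (\sum_t y t * f t) <= (\sum_t y t * e t) * (\sum_t x t * f t).
Proof.
move=> xy fe; rewrite -subr_ge0.
have -> : (\sum_t y t * e t) * (\sum_t x t * f t) - (\sum_t x t * e t) * (\sum_t y t * f t)
          = \sum_t \sum_t' (y t * e t * (x t' * f t') - x t * e t * (y t' * f t')).
  rewrite !big_distrlr -sumrB; apply: eq_bigr => t _.
  by rewrite -sumrB; apply: eq_bigr => t' _.
apply: (double_sum_ge0 th_inj) => [t|t t' lt_tt']; first by rewrite (_ : _ - _ = 0) //; ring.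
have -> : y t * e t * (x t' * f t') - x t * e t * (y t' * f t')
          + (y t' * e t' * (x t * f t) - x t' * e t' * (y t * f t))
          = (y t * x t' - y t' * x t) * (e t * f t' - e t' * f t) by ring.
by apply: mulr_ge0; rewrite subr_ge0; [exact: xy | exact: fe].
Qed.

Lemma LR_ge_mulr (w f e : T -> R) : (forall t, 0 <= w t) -> LR_ge th f e ->
  LR_ge th (fun t => w t * f t) (fun t => w t * e t).
Proof.
move=> w_ge0 fe t t' lt_tt'; rewrite -subr_ge0.
have -> : w t * e t * (w t' * f t') - w t' * e t' * (w t * f t)
          = w t * w t' * (e t * f t' - e t' * f t) by ring.
by rewrite mulr_ge0 ?mulr_ge0 // subr_ge0 fe.
Qed.

Lemma LR_ge_nondecreasing (a : T -> R) :
  (forall t t', th t < th t' -> a t <= a t') -> LR_ge th a (fun=> 1).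
Proof. by move=> a_mono t t' lt_tt'; rewrite !mul1r a_mono. Qed.

End LikelihoodRatio.

Section Posteriors.
Variables (R : realFieldType) (T S : finType).
Implicit Types (r q : T -> R) (pi : S -> T -> R) (a : {ffun T -> R}).

Definition marginal r pi s : R := \sum_t r t * pi s t.

Lemma marginal_gt0 r pi s :
  (forall t, 0 < r t) -> signal_structure pi -> 0 < marginal r pi s.
Proof.
move=> r_gt0 [pi01 _ pi_supp]; have [t pi_t] := pi_supp s.
rewrite /marginal (bigD1 t) //=.
have : 0 <= \sum_(t' | t' != t) r t' * pi s t'.
  apply: sumr_ge0 => t' _; have /andP[pi_ge0 _] := pi01 s t'.
  exact: mulr_ge0 (ltW (r_gt0 t')) pi_ge0.
have : 0 < r t * pi s t by rewrite mulr_gt0.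
lra.
Qed.

Lemma post_valE q pi s a :
  post_val q pi s a = (\sum_t q t * pi s t * a t) / marginal q pi s.
Proof. by rewrite /post_val mulr_suml; apply: eq_bigr => t _; rewrite mulrAC. Qed.

Lemma marginal_post_val q pi s a : marginal q pi s != 0 ->
  marginal q pi s * post_val q pi s a = \sum_t q t * pi s t * a t.
Proof. by move=> m_neq0; rewrite post_valE mulrC divfK. Qed.

Lemma pay_selection (A : seq {ffun T -> R}) q pi ahat s :
  selection A q pi ahat -> pay A q pi s = post_val q pi s (ahat s).
Proof.
move=> sel; have [ahat_in ahat_max] := sel s.
have head_in : head 0 A \in A by case: (A) ahat_in => //= a A' _; rewrite mem_head.
apply: le_anti; rewrite /pay /Defs.maxA (le_bigmax_seq _ _ _ _ ahat_in) // andbT big_seq.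
by apply: bigmax_le => [|a]; apply: ahat_max.
Qed.

Lemma avg_pay_selection (A : seq {ffun T -> R}) p q pi ahat :
  selection A q pi ahat ->
  avg_pay A p q pi = \sum_s marginal p pi s * post_val q pi s (ahat s).
Proof.
move=> sel; rewrite /avg_pay; under eq_bigr do rewrite mulr_sumr.
rewrite exchange_big; apply: eq_bigr => s _.
rewrite (pay_selection _ sel) /marginal mulr_suml.
by apply: eq_bigr => t _; rewrite mulrA.
Qed.

Lemma MLR_LR_ge (th : T -> R) (sv : S -> R) pi s1 s2 :
  MLR th sv pi -> sv s1 < sv s2 -> LR_ge th (pi s2) (pi s1).
Proof. by move=> hM lt12 t t'; exact: hM. Qed.

Lemma marginal_cross_MLR (th : T -> R) (sv : S -> R) (x y : T -> R) pi s1 s2 :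
  injective th -> LR_ge th x y -> MLR th sv pi -> sv s1 < sv s2 ->
  marginal x pi s1 * marginal y pi s2 <= marginal y pi s1 * marginal x pi s2.
Proof. by move=> th_inj xy hM lt12; have := LR_ge_cross th_inj xy (MLR_LR_ge hM lt12). Qed.

Lemma post_val_le_MLR (th : T -> R) (sv : S -> R) q pi a s1 s2 :
  injective th -> (forall t, 0 < q t) -> signal_structure pi ->
  MLR th sv pi -> sv s1 < sv s2 -> (forall t t', th t < th t' -> a t <= a t') ->
  post_val q pi s1 a <= post_val q pi s2 a.
Proof.
move=> th_inj q_gt0 hpi hM lt12 a_mono.
have m_gt0 s : 0 < marginal q pi s by exact: marginal_gt0.
rewrite !post_valE ler_pdivrMr // mulrAC ler_pdivlMr //.
have := LR_ge_cross th_inj (LR_ge_mulr (fun t => ltW (q_gt0 t)) (MLR_LR_ge hM lt12))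
                           (LR_ge_nondecreasing a_mono).
have sum_mulr1 s : \sum_t q t * pi s t * 1 = marginal q pi s.
  by apply: eq_bigr => t _; rewrite mulr1.
by rewrite !sum_mulr1 mulrC [X in _ <= X]mulrC.
Qed.

End Posteriors.

Section Garbling.
Variables (R : realFieldType) (T S S' : finType).
Variables (pi : S -> T -> R) (pi' : S' -> T -> R) (g : S -> S' -> R).
Hypothesis hg : garbling pi pi' g.
Implicit Types (r : T -> R) (a : {ffun T -> R}).

Lemma marginal_garbling r s :
  marginal r pi s = \sum_s' g s s' * marginal r pi' s'.
Proof.
case: hg => _ _ pi_g; rewrite /marginal; under eq_bigr do rewrite pi_g mulr_sumr.
rewrite exchange_big; apply: eq_bigr => s' _; rewrite mulr_sumr.
by apply: eq_bigr => t _; rewrite mulrCA.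
Qed.

Lemma mu_ss'E r s s' : mu_ss' pi' g r s s' = g s s' * marginal r pi' s'.
Proof. by rewrite /mu_ss' mulr_sumr; apply: eq_bigr => t _; rewrite /mu mulrC. Qed.

Lemma mu_sE r s : mu_s pi' g r s = marginal r pi s.
Proof.
rewrite marginal_garbling /mu_s exchange_big.
by apply: eq_bigr => s' _; rewrite -mu_ss'E.
Qed.

Lemma mu_s'E r s' : mu_s' pi' g r s' = marginal r pi' s'.
Proof.
case: hg => _ g_sum1 _; apply: eq_bigr => t _.
by rewrite /mu -mulr_sumr g_sum1 mulr1.
Qed.

Lemma mu_s'_given_sE r s' s :
  mu_s'_given_s pi' g r s' s = g s s' * marginal r pi' s' / marginal r pi s.
Proof. by rewrite /mu_s'_given_s mu_ss'E mu_sE. Qed.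

(* Conditioning on (s, s') forgets s as soon as the pair has positive weight. *)
Lemma mulr_sum_mu_t_given_ss' r s s' a :
  g s s' * \sum_t mu_t_given_ss' pi' g r t s s' * a t = g s s' * post_val r pi' s' a.
Proof.
rewrite !mulr_sumr; apply: eq_bigr => t _; rewrite !mulrA; congr (_ * _).
rewrite /mu_t_given_ss' mu_ss'E /mu /posterior -/(marginal r pi' s').
have [->|g_neq0] := eqVneq (g s s') 0; first by rewrite !mul0r.
have [->|m_neq0] := eqVneq (marginal r pi' s') 0; first by rewrite mulr0 !invr0 !mulr0.
by field; rewrite g_neq0 m_neq0.
Qed.

Lemma sum_garbling_post_val q s a :
  (forall t, 0 < q t) -> signal_structure pi -> signal_structure pi' ->
  \sum_s' g s s' * marginal q pi' s' * post_val q pi' s' a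
    = marginal q pi s * post_val q pi s a.
Proof.
move=> q_gt0 hpi hpi'; case: hg => _ _ pi_g.
rewrite marginal_post_val ?lt0r_neq0 ?marginal_gt0 //.
under eq_bigr do rewrite -mulrA marginal_post_val ?lt0r_neq0 ?marginal_gt0 // mulr_sumr.
rewrite exchange_big; apply: eq_bigr => t _; rewrite pi_g mulr_sumr mulr_suml.
by apply: eq_bigr => s' _; ring.
Qed.

End Garbling.

Section Decomposition.
Variables (R : realFieldType) (T S S' : finType) (A : seq {ffun T -> R}) (p q : T -> R).
Variables (pi : S -> T -> R) (pi' : S' -> T -> R) (g : S -> S' -> R).
Variables (ahat : S -> {ffun T -> R}) (ahat' : S' -> {ffun T -> R}).
Hypotheses (p_gt0 : forall t, 0 < p t) (q_gt0 : forall t, 0 < q t).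
Hypotheses (hpi : signal_structure pi) (hpi' : signal_structure pi').
Hypotheses (hg : garbling pi pi' g) (sel : selection A q pi ahat).

Lemma CcompE : Ccomp pi' g p q ahat =
  \sum_s \sum_s' g s s' *
    (marginal p pi' s' - marginal p pi s / marginal q pi s * marginal q pi' s') *
    post_val q pi' s' (ahat s).
Proof.
apply: eq_bigr => s _; rewrite mulr_sumr; apply: eq_bigr => s' _.
have mp_neq0 : marginal p pi s != 0 by rewrite lt0r_neq0 ?marginal_gt0.
have mq_neq0 : marginal q pi s != 0 by rewrite lt0r_neq0 ?marginal_gt0.
rewrite mulrA (mu_sE hg) !(mu_s'_given_sE hg).
have -> : marginal p pi s * (g s s' * marginal p pi' s' / marginal p pi s
                             - g s s' * marginal q pi' s' / marginal q pi s)
          = g s s' * (marginal p pi' s' - marginal p pi s / marginal q pi s * marginal q pi' s').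
  by field; rewrite mq_neq0 mp_neq0.
by rewrite mulrAC mulr_sum_mu_t_given_ss' mulrAC.
Qed.

Lemma IcompE : Icomp pi' g p q ahat ahat' =
  \sum_s' marginal p pi' s' *
    (post_val q pi' s' (ahat' s') - \sum_s g s s' * post_val q pi' s' (ahat s)).
Proof.
apply: eq_bigr => s' _; rewrite (mu_s'E hg); congr (_ * _).
rewrite /post_val; under [X in _ - X]eq_bigr do rewrite mulr_sumr.
rewrite exchange_big -sumrB; apply: eq_bigr => t _.
by rewrite mulrBr mulr_sumr; congr (_ - _); apply: eq_bigr => s _; rewrite mulrCA.
Qed.

Lemma avg_pay_garbling_decomposition : selection A q pi' ahat' ->
  avg_pay A p q pi' - avg_pay A p q pi
    = Ccomp pi' g p q ahat + Icomp pi' g p q ahat ahat'.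
Proof.
move=> sel'; rewrite CcompE IcompE (avg_pay_selection _ sel) (avg_pay_selection _ sel').
set X := \sum_s \sum_s' g s s' * marginal p pi' s' * post_val q pi' s' (ahat s).
have -> : \sum_s \sum_s' g s s' *
            (marginal p pi' s' - marginal p pi s / marginal q pi s * marginal q pi' s') *
            post_val q pi' s' (ahat s)
          = X - \sum_s marginal p pi s * post_val q pi s (ahat s).
  rewrite -sumrB; apply: eq_bigr => s _.
  have mq_neq0 : marginal q pi s != 0 by rewrite lt0r_neq0 ?marginal_gt0.
  have -> : marginal p pi s * post_val q pi s (ahat s)
            = marginal p pi s / marginal q pi s * (marginal q pi s * post_val q pi s (ahat s)).
    by field.
  rewrite -(sum_garbling_post_val hg) // mulr_sumr -sumrB.
  by apply: eq_bigr => s' _; ring.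
have -> : \sum_s' marginal p pi' s' *
            (post_val q pi' s' (ahat' s') - \sum_s g s s' * post_val q pi' s' (ahat s))
          = \sum_s' marginal p pi' s' * post_val q pi' s' (ahat' s') - X.
  rewrite /X exchange_big -sumrB; apply: eq_bigr => s' _.
  by rewrite mulrBr; congr (_ - _); rewrite mulr_sumr; apply: eq_bigr => s _; ring.
lra.
Qed.

Lemma Icomp_ge0 : selection A q pi' ahat' -> 0 <= Icomp pi' g p q ahat ahat'.
Proof.
move=> sel'; rewrite IcompE; apply: sumr_ge0 => s' _.
apply: mulr_ge0; first by rewrite ltW ?marginal_gt0.
rewrite subr_ge0.
case: hg => g01 g_sum1 _.
rewrite -[X in _ <= X]mul1r -(g_sum1 s') mulr_suml; apply: ler_sum => s _.
have /andP[g_ge0 _] := g01 s s'.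
by rewrite ler_wpM2l //; apply: (sel' s').2; exact: (sel s).1.
Qed.

Lemma Ccomp_double_sum : Ccomp pi' g p q ahat =
  \sum_s (marginal q pi s)^-1 * \sum_s1 \sum_s2
    g s s1 * g s s2 *
    (marginal q pi' s1 * marginal p pi' s2 - marginal p pi' s1 * marginal q pi' s2) *
    post_val q pi' s2 (ahat s).
Proof.
rewrite CcompE; apply: eq_bigr => s _.
have mq_neq0 : marginal q pi s != 0 by rewrite lt0r_neq0 ?marginal_gt0.
rewrite exchange_big mulr_sumr; apply: eq_bigr => s2 _; rewrite -mulr_suml.
have -> : \sum_s1 (g s s1 * g s s2 *
            (marginal q pi' s1 * marginal p pi' s2 - marginal p pi' s1 * marginal q pi' s2))
          = g s s2 * (marginal q pi s * marginal p pi' s2 - marginal p pi s * marginal q pi' s2).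
  rewrite !(marginal_garbling hg) !mulr_suml -sumrB mulr_sumr.
  by apply: eq_bigr => s1 _; ring.
by field.
Qed.

Lemma Ccomp_sign (th : T -> R) (sv : S' -> R) (c : R) :
  injective th -> injective sv -> MLR th sv pi' -> monotone_firm th A ->
  (forall s1 s2, sv s1 < sv s2 -> 0 <= c *
     (marginal q pi' s1 * marginal p pi' s2 - marginal p pi' s1 * marginal q pi' s2)) ->
  0 <= c * Ccomp pi' g p q ahat.
Proof.
move=> th_inj sv_inj hM mono cD_ge0.
rewrite Ccomp_double_sum mulr_sumr; apply: sumr_ge0 => s _.
rewrite mulrCA; apply: mulr_ge0; first by rewrite invr_ge0 ltW ?marginal_gt0.
pose D s1 s2 := marginal q pi' s1 * marginal p pi' s2 - marginal p pi' s1 * marginal q pi' s2.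
have -> : c * \sum_s1 \sum_s2 g s s1 * g s s2 * D s1 s2 * post_val q pi' s2 (ahat s)
          = \sum_s1 \sum_s2 g s s1 * g s s2 * (c * D s1 s2) * post_val q pi' s2 (ahat s).
  rewrite mulr_sumr; apply: eq_bigr => s1 _.
  by rewrite mulr_sumr; apply: eq_bigr => s2 _; ring.
apply: (weighted_double_sum_ge0 sv_inj).
- by move=> s'; case: hg => g01 _ _; case/andP: (g01 s s').
- by move=> s1 s2; rewrite /D; ring.
- exact: cD_ge0.
move=> s1 s2 lt12; apply: (post_val_le_MLR th_inj _ _ hM lt12) => // t t' lt_tt'.
by apply/ltW/mono => //; exact: (sel s).1.
Qed.

End Decomposition.

Unset Implicit Arguments. Set Strict Implicit.

Theorem theorem1 (R : realFieldType) (T S S' : finType) (th : T -> R)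
  (A : seq {ffun T -> R}) (p q : T -> R)
  (pi : S -> T -> R) (pi' : S' -> T -> R) (g : S -> S' -> R)
  (ahat : S -> {ffun T -> R}) (ahat' : S' -> {ffun T -> R}) :
  injective th -> (1 < #|T|)%N ->
  A != [::] ->
  full_support p -> full_support q ->
  signal_structure pi -> signal_structure pi' ->
  garbling pi pi' g ->
  selection A q pi ahat -> selection A q pi' ahat' ->
  [/\ avg_pay A p q pi' - avg_pay A p q pi
        = Ccomp pi' g p q ahat + Icomp pi' g p q ahat ahat',
      0 <= Icomp pi' g p q ahat ahat' &
      (monotone_firm th A ->
       forall sv : S' -> R, injective sv -> MLR th sv pi' ->
         (LR_ge th p q -> 0 <= Ccomp pi' g p q ahat) /\
         (LR_ge th q p -> Ccomp pi' g p q ahat <= 0))].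
Proof.
move=> th_inj _ _ [p_gt0 _] [q_gt0 _] hpi hpi' hg sel sel'; split.
- exact: avg_pay_garbling_decomposition p_gt0 q_gt0 hpi hpi' hg sel sel'.
- exact: Icomp_ge0 p_gt0 hpi' hg sel sel'.
move=> mono sv sv_inj hM.
have C_sign := Ccomp_sign p_gt0 q_gt0 hpi hpi' hg sel th_inj sv_inj hM mono.
split=> hLR.
- rewrite -[Ccomp _ _ _ _ _]mul1r; apply: C_sign => s1 s2 lt12.
  by rewrite mul1r subr_ge0 (marginal_cross_MLR th_inj hLR hM lt12).
- rewrite -oppr_ge0 -mulN1r; apply: C_sign => s1 s2 lt12.
  by rewrite mulN1r opprB subr_ge0 (marginal_cross_MLR th_inj hLR hM lt12).
Qed.
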